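(* Let $R$ be a commutative Noetherian ring, $M$ a faithful primeful $R$-module having at least one prime submodule, $X=\mathrm{Spec}(M)$, $N$ an $R$-module, $K\le M$, $U=X\setminus V(K)$, and $W$ an open subset of $X$ with $U\subseteq W$. Let $\rho_{WU}:\mathcal{A}(N,M)(W)\to\mathcal{A}(N,M)(U)$ be the restriction map. Then $\ker(\rho_{WU})=\Gamma_{(K:M)}(\mathcal{A}(N,M)(W))$.
   Context: For a submodule $L$ of an $R$-module $M$, $(L:M)=\{r\in R\mid rM\subseteq L\}$. A submodule $P$ of $M$ is prime if $P\neq M$ and whenever $rm\in P$ ($r\in R$, $m\in M$) then $r\in (P:M)$ or $m\in P$. $\mathrm{Spec}(M)$ is the set of prime submodules. $M$ is faithful if $\mathrm{Ann}_R(M)=0$; primeful if $M=0$ or $\mathrm{Spec}(M)\to\mathrm{Spec}(R/\mathrm{Ann}(M))$, $P\mapsto(P:M)/\mathrm{Ann}(M)$, is surjective. For $L\le M$, $V(L)=\{P\in X\mid (P:M)\supseteq (L:M)\}$; these are the closed sets of the Zariski topology. For open $U\subseteq X$, $\mathrm{Supp}(U)=\{(P:M)\mid P\in U\}$. $\mathcal{A}(N,M)(U)$ is the $R$-module of families $(\gamma_{\mathfrak p})_{\mathfrak p\in\mathrm{Supp}(U)}\in\prod_{\mathfrak p\in\mathrm{Supp}(U)}N_{\mathfrak p}$ such that for each $Q\in U$ there exist an open neighbourhood $W'\subseteq U$ of $Q$ and $s\in R$, $m\in N$ with $s\notin(P:M)$ and $\gamma_{(P:M)}=m/s$ for every $P\in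 W'$. For $V\subseteq U$ open, $\rho_{UV}$ sends $(\gamma_{\mathfrak p})_{\mathfrak p\in\mathrm{Supp}(U)}$ to $(\gamma_{\mathfrak p})_{\mathfrak p\in\mathrm{Supp}(V)}$ (zero map if $V=\emptyset$). $\Gamma_I(H)=\bigcup_{n\ge1}(0:_H I^n)$. *)

From HB Require Import structures.
From mathcomp Require Import all_boot all_algebra.
Set Implicit Arguments. Unset Strict Implicit. Unset Printing Implicit Defensive.
Import GRing.Theory.
Local Open Scope ring_scope.

Section Defs.
Variable R : comNzRingType.

Definition is_ideal (I : R -> Prop) : Prop :=
  I 0 /\ (forall x y, I x -> I y -> I (x + y)) /\ (forall r x, I x -> I (r * x)).

Definition prime_ideal (p : R -> Prop) : Prop :=
  is_ideal p /\ ~ p 1 /\ (forall x y, p (x * y) -> p x \/ p y).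

Definition noetherian : Prop :=
  forall I : nat -> R -> Prop, (forall n, is_ideal (I n)) ->
    (forall n r, I n r -> I n.+1 r) ->
    exists k, forall n r, (k <= n)%N -> I n r -> I k r.

Definition ideal_mul (I J : R -> Prop) (r : R) : Prop :=
  exists s : seq (R * R), (forall x, x \in s -> I x.1 /\ J x.2) /\
    r = \sum_(x <- s) x.1 * x.2.

Fixpoint ideal_pow (I : R -> Prop) (n : nat) : R -> Prop :=
  match n with
  | 0 => fun _ => True
  | n'.+1 => ideal_mul (ideal_pow I n') I
  end.

Section Mod.
Variable M : lmodType R.

Definition submod (L : M -> Prop) : Prop :=
  L 0 /\ (forall x y, L x -> L y -> L (x + y)) /\ (forall r x, L x -> L (r *: x)).

Definition colon (L : M -> Prop) (r : R) : Prop := forall m : M, L (r *: m).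

Definition ann : R -> Prop := colon (fun m => m = 0).

Definition prime_submod (P : M -> Prop) : Prop :=
  submod P /\ (exists m, ~ P m) /\
  (forall (r : R) (m : M), P (r *: m) -> colon P r \/ P m).

Definition faithful : Prop := forall r, ann r -> r = 0.

(* surjectivity of Spec(M) -> Spec(R/Ann M), via the correspondence between
   primes of R/Ann(M) and primes of R containing Ann(M) *)
Definition primeful : Prop :=
  (forall m : M, m = 0) \/
  forall p : R -> Prop, prime_ideal p -> (forall r, ann r -> p r) ->
    exists P, prime_submod P /\ forall r, colon P r <-> p r.

Definition spec := {P : M -> Prop | prime_submod P}.

Definition zV (L : M -> Prop) (P : spec) : Prop :=
  forall r, colon L r -> colon (sval P) r.

Definition zopen (U : spec -> Prop) : Prop :=
  exists L, submod L /\ forall P, U P <-> ~ zV L P.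

Definition supp (U : spec -> Prop) (p : R -> Prop) : Prop :=
  exists P, U P /\ colon (sval P) = p.

Section Loc.
Variable N : lmodType R.

(* localization N_p: elements are equivalence classes of pairs (m, s), s \notin p *)
Definition loc_rel (p : R -> Prop) (x y : N * R) : Prop :=
  ~ p y.2 /\ exists t, ~ p t /\ t *: (y.2 *: x.1 - x.2 *: y.1) = 0.

Definition frac (p : R -> Prop) (m : N) (s : R) : N * R -> Prop := loc_rel p (m, s).

Definition loc0 (p : R -> Prop) := frac p 0 1.

Definition loc_scale (p : R -> Prop) (r : R) (C : N * R -> Prop) : N * R -> Prop :=
  fun y => exists x, C x /\ ~ p x.2 /\ loc_rel p (r *: x.1, x.2) y.

(* a family (gamma_p)_p; only the components at p in Supp(W) are meaningful *)
Definition fam := (R -> Prop) -> (N * R -> Prop).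

(* gamma \in A(N,M)(W) *)
Definition sect (W : spec -> Prop) (g : fam) : Prop :=
  forall Q, W Q -> exists W', zopen W' /\ (forall P, W' P -> W P) /\ W' Q /\
    exists (s : R) (m : N), forall P, W' P ->
      ~ colon (sval P) s /\ g (colon (sval P)) = frac (colon (sval P)) m s.

(* ker(rho_{WU}) : families in A(N,M)(W) whose restriction to Supp(U) is 0 *)
Definition restr_ker (W U : spec -> Prop) (g : fam) : Prop :=
  sect W g /\ forall p, supp U p -> g p = loc0 p.

(* Gamma_I(A(N,M)(W)) = union over n >= 1 of (0 :_{A(W)} I^n) *)
Definition Gamma (I : R -> Prop) (W : spec -> Prop) (g : fam) : Prop :=
  sect W g /\ exists n, (1 <= n)%N /\
    forall r, ideal_pow I n r -> forall p, supp W p -> loc_scale p r (g p) = loc0 p.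

End Loc.
End Mod.
End Defs.

From Pilot Require Import Defs.
From HB Require Import structures.
From mathcomp Require Import all_boot all_algebra.
From mathcomp Require Import ring.
From Stdlib Require Import Classical FunctionalExtensionality PropExtensionality IndefiniteDescription.
Set Implicit Arguments. Unset Strict Implicit. Unset Printing Implicit Defensive.
Import GRing.Theory.
Local Open Scope ring_scope.

(* Let I = (K:M). If g vanishes on U, take a presentation g = m/s near a point P of W,
   on a neighbourhood where some j (with j in (L:M) but not in (P:M)) is inverted.
   By primefulness every prime q of R containing the j-saturation T of Ann(m) and
   avoiding j is a colon (Q:M) with Q near P; if q did not contain I, Q would lie in U,
   so m/s = 0 in N_q and some t outside q kills m, contradicting T in q. Hence I lies in
   every such prime, and in a Noetherian ring a maximal counterexample, which is prime,
   shows I^n is contained in T: I^n kills g wherever j is inverted. The ideals of those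
   t for which I^n kills g wherever t is inverted form an ascending chain in n, and its
   stabilisation gives one exponent for all of W. Conversely, if I^n kills g and r lies
   in I but not in p, then r^n g_p = 0 forces g_p = 0. *)

Section IdealArithmetic.
Variable R : comNzRingType.
Implicit Types (I J T p : R -> Prop) (a b r x : R).

Lemma ideal_sum T (X : eqType) (s : seq X) (F : X -> R) :
  is_ideal T -> (forall i, i \in s -> T (F i)) -> T (\sum_(i <- s) F i).
Proof.
move=> [T0 [TD _]]; elim: s => [|i s IH] Hs; first by rewrite big_nil.
rewrite big_cons; apply: TD; first by apply: Hs; rewrite mem_head.
by apply: IH => j Hj; apply: Hs; rewrite in_cons Hj orbT.
Qed.

Lemma ideal_mul_sub I J T r :
  is_ideal T -> (forall a b, I a -> J b -> T (a * b)) -> ideal_mul I J r -> T r.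
Proof.
move=> HT HIJ [s [Hs ->]]; apply: ideal_sum => // x /Hs [Hx1 Hx2]; exact: HIJ.
Qed.

Lemma is_ideal_mul I J : is_ideal I -> is_ideal (ideal_mul I J).
Proof.
move=> [_ [_ IM]]; split; [|split].
- by exists [::]; rewrite big_nil.
- move=> x y [s1 [H1 ->]] [s2 [H2 ->]]; exists (s1 ++ s2); rewrite big_cat.
  by split=> // z; rewrite mem_cat => /orP [/H1|/H2].
- move=> r x [s [Hs ->]]; exists [seq (r * z.1, z.2) | z <- s]; split.
  + by move=> z /mapP [w /Hs [Hw1 Hw2] ->]; split=> //; apply: IM.
  + by rewrite big_map mulr_sumr; apply: eq_bigr => z _; rewrite mulrA.
Qed.

Lemma is_ideal_pow I n : is_ideal I -> is_ideal (ideal_pow I n).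
Proof. by move=> HI; elim: n => [|n IH] //=; apply: is_ideal_mul. Qed.

Lemma ideal_pow_decr I m n r :
  is_ideal I -> (m <= n)%N -> ideal_pow I n r -> ideal_pow I m r.
Proof.
move=> HI; elim: n r => [|n IH] r; first by rewrite leqn0 => /eqP->.
rewrite leq_eqVlt => /orP [/eqP->//|/IH {}IH] /=; apply: ideal_mul_sub.
  exact: is_ideal_pow.
move=> a b /IH Ha _; case: (is_ideal_pow m HI) => _ [_ HM].
by rewrite mulrC; apply: HM.
Qed.

Lemma ideal_pow1 I r : is_ideal I -> ideal_pow I 1 r -> I r.
Proof. by move=> HI; apply: ideal_mul_sub => // a b _; case: HI => _ [_]; apply. Qed.

Lemma ideal_powX I n x : I x -> ideal_pow I n (x ^+ n).
Proof.
move=> Hx; elim: n => [|n IH] //=; exists [:: (x ^+ n, x)].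
by rewrite big_seq1 exprSr; split=> // z; rewrite inE => /eqP->.
Qed.

Lemma ideal_mul_single I J a b : I a -> J b -> ideal_mul I J (a * b).
Proof.
by move=> Ha Hb; exists [:: (a, b)]; rewrite big_seq1; split=> // z; rewrite inE => /eqP->.
Qed.

Lemma ideal_powD I m n r :
  is_ideal I -> ideal_pow I (m + n) r -> ideal_mul (ideal_pow I m) (ideal_pow I n) r.
Proof.
move=> HI; elim: n r => [|n IH] r.
  by rewrite addn0 => Hr; rewrite -[r]mulr1; apply: ideal_mul_single.
rewrite addnS /=; apply: ideal_mul_sub; first exact/is_ideal_mul/is_ideal_pow.
move=> a b /IH [s [Hs ->]] Hb; rewrite mulr_suml.
exists [seq (z.1, z.2 * b) | z <- s]; split.
- by move=> z /mapP [w /Hs [Hw1 Hw2] ->]; split=> //; apply: ideal_mul_single.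
- by rewrite big_map; apply: eq_bigr => z _; rewrite mulrA.
Qed.

Lemma prime_idealM_notin p a b : prime_ideal p -> ~ p a -> ~ p b -> ~ p (a * b).
Proof. by move=> [_ [_ Hp]] Ha Hb /Hp []. Qed.

Lemma prime_idealX_notin p a n : prime_ideal p -> ~ p a -> ~ p (a ^+ n).
Proof.
move=> Hp Ha; elim: n => [|n IH]; first by rewrite expr0; case: Hp => _ [].
by rewrite exprS; apply: prime_idealM_notin.
Qed.

End IdealArithmetic.

Lemma noetherian_maximal (R : comNzRingType) (F : (R -> Prop) -> Prop) (T0 : R -> Prop) :
  noetherian R -> (forall T, F T -> is_ideal T) -> F T0 ->
  exists2 T, F T & forall T', F T' -> (forall r, T r -> T' r) -> forall r, T' r -> T r.
Proof.
move=> HR HF HT0; apply: NNPP => Hnomax.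
have grow (X : {T | F T}) : {Y : {T | F T} |
    (forall r, sval X r -> sval Y r) /\ exists r, sval Y r /\ ~ sval X r}.
  apply: constructive_indefinite_description; case: X => X HX.
  apply: NNPP => Hn; apply: Hnomax; exists X => // T' HT' HXT' r HT'r.
  apply: NNPP => HXr; apply: Hn; exists (exist _ T' HT'); split=> //; by exists r.
pose chain n := iter n (fun X => sval (grow X)) (exist _ T0 HT0).
have [k Hk] := HR (fun n => sval (chain n)) (fun n => HF _ (svalP (chain n)))
  (fun n => proj1 (svalP (grow (chain n)))).
have [_ [r [Hr Hnr]]] := svalP (grow (chain k)).
by apply: Hnr; apply: (Hk k.+1).
Qed.

Section Saturation.
Variables (R : comNzRingType) (f : R).
Implicit Types (T A : R -> Prop) (a b r x y : R).

Definition saturated T := forall r, T (f * r) -> T r.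

Definition sat A r := exists k, A (f ^+ k * r).

Definition adjoin T x r := exists t c, T t /\ r = t + c * x.

Lemma saturatedX T k r : saturated T -> T (f ^+ k * r) -> T r.
Proof.
move=> HT; elim: k r => [|k IH] r; first by rewrite expr0 mul1r.
by rewrite exprS -mulrA => /HT /IH.
Qed.

Lemma sub_sat A r : A r -> sat A r.
Proof. by exists 0%N; rewrite expr0 mul1r. Qed.

Lemma sat_saturated A : saturated (sat A).
Proof. by move=> r [k Hk]; exists k.+1; rewrite exprSr -mulrA. Qed.

Lemma is_ideal_sat A : is_ideal A -> is_ideal (sat A).
Proof.
move=> [A0 [AD AM]]; split; [|split].
- by exists 0%N; rewrite mulr0.
- move=> a b [k1 Ha] [k2 Hb]; exists (k1 + k2)%N.
  have -> : f ^+ (k1 + k2) * (a + b) = f ^+ k2 * (f ^+ k1 * a) + f ^+ k1 * (f ^+ k2 * b).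
    by rewrite exprD; ring.
  by apply: AD; apply: AM.
- move=> r a [k Ha]; exists k; rewrite mulrCA; exact: AM.
Qed.

Lemma sub_adjoin T x r : T r -> adjoin T x r.
Proof. by exists r, 0; rewrite mul0r addr0. Qed.

Lemma adjoin_self T x : is_ideal T -> adjoin T x x.
Proof. by case=> T0 _; exists 0, 1; rewrite add0r mul1r. Qed.

Lemma is_ideal_adjoin T x : is_ideal T -> is_ideal (adjoin T x).
Proof.
move=> [T0 [TD TM]]; split; [|split].
- exact: sub_adjoin.
- move=> _ _ [t1 [c1 [Ht1 ->]]] [t2 [c2 [Ht2 ->]]].
  by exists (t1 + t2), (c1 + c2); split; [apply: TD | ring].
- move=> r _ [t [c [Ht ->]]].
  by exists (r * t), (r * c); split; [apply: TM | ring].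
Qed.

Lemma sat_adjoin_mul T x y a b : is_ideal T -> saturated T -> T (x * y) ->
  sat (adjoin T x) a -> sat (adjoin T y) b -> T (a * b).
Proof.
move=> [_ [TD TM]] HsT Hxy [k1 [t1 [c1 [Ht1 Ea]]]] [k2 [t2 [c2 [Ht2 Eb]]]].
apply: (@saturatedX _ (k1 + k2)) => //.
have -> : f ^+ (k1 + k2) * (a * b) = (f ^+ k1 * a) * (f ^+ k2 * b) by rewrite exprD; ring.
rewrite Ea Eb.
have -> : (t1 + c1 * x) * (t2 + c2 * y) = (t2 + c2 * y) * t1 + (c1 * x) * t2 + (c1 * c2) * (x * y)
  by ring.
by apply: (TD); [apply: (TD)|]; apply: (TM).
Qed.

End Saturation.

Section NoetherianPowers.
Variables (R : comNzRingType) (I : R -> Prop) (f : R).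
Hypotheses (HR : noetherian R) (HI : is_ideal I).

Definition pow_free (T : R -> Prop) := ~ exists n, forall r, ideal_pow I n r -> T r.

Lemma maximal_pow_free_prime T : is_ideal T -> saturated f T -> pow_free T ->
  (forall T', is_ideal T' -> saturated f T' -> pow_free T' ->
     (forall r, T r -> T' r) -> forall r, T' r -> T r) ->
  prime_ideal T.
Proof.
move=> HT HsT HfT Tmax.
have extend x : ~ T x -> exists n, forall r, ideal_pow I n r -> sat f (adjoin T x) r.
  move=> Hx; apply: NNPP => Hfree; apply: Hx; apply: (Tmax (sat f (adjoin T x))).
  - exact/is_ideal_sat/is_ideal_adjoin.
  - exact: sat_saturated.
  - exact: Hfree.
  - by move=> r Hr; apply/sub_sat/sub_adjoin.
  - exact/sub_sat/adjoin_self.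
split=> //; split.
  move=> H1; apply: HfT; exists 0%N => r _; rewrite -[r]mulr1.
  by case: HT => _ [_]; apply.
move=> x y Hxy; apply: NNPP => /not_or_and [/extend [n1 H1] /extend [n2 H2]].
apply: HfT; exists (n1 + n2)%N => r /(ideal_powD HI).
by apply: ideal_mul_sub => // a b /H1 Ha /H2 Hb; apply: sat_adjoin_mul Ha Hb.
Qed.

Lemma noetherian_ideal_pow_sub T0 : is_ideal T0 -> saturated f T0 ->
  (forall p, prime_ideal p -> (forall r, T0 r -> p r) -> ~ p f -> forall x, I x -> p x) ->
  exists n, forall r, ideal_pow I n r -> T0 r.
Proof.
move=> HT0 HsT0 Hprimes; apply: NNPP => HfT0.
pose F T := [/\ is_ideal T, (forall r, T0 r -> T r), saturated f T & pow_free T].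
have [T [HT HT0T HsT HfT] Tmax] : exists2 T, F T &
    forall T', F T' -> (forall r, T r -> T' r) -> forall r, T' r -> T r.
  apply: (noetherian_maximal HR (T0 := T0)); first by move=> T [].
  by split.
have Tprime : prime_ideal T.
  apply: maximal_pow_free_prime => // T' HT' HsT' HfT' HTT'.
  by apply: Tmax => //; split=> // r /HT0T /HTT'.
have HfnT : ~ T f by move=> Hf; case: Tprime => _ [+ _]; apply; apply: HsT; rewrite mulr1.
by apply: HfT; exists 1%N => r /(ideal_pow1 HI); apply: Hprimes.
Qed.

End NoetherianPowers.

Section Modules.
Variables (R : comNzRingType) (M : lmodType R).

Lemma colon_ideal (K : M -> Prop) : submod K -> is_ideal (colon K).
Proof.
move=> [K0 [KD KZ]]; split; [|split].
- by move=> m; rewrite scale0r.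
- by move=> x y Hx Hy m; rewrite scalerDl; apply: KD.
- by move=> r x Hx m; rewrite -scalerA; apply: KZ.
Qed.

Lemma prime_submod_colon (P : M -> Prop) : prime_submod P -> prime_ideal (colon P).
Proof.
move=> [HP [[m0 Hm0] Hprime]]; split; first exact: colon_ideal.
split; first by move=> H1; apply: Hm0; rewrite -[m0]scale1r.
move=> x y Hxy; case: (classic (colon P x)) => Hx; [by left | right].
by move=> m; case: (Hprime x (y *: m)); rewrite ?scalerA.
Qed.

Lemma not_zVP (L : M -> Prop) (P : spec M) :
  ~ zV L P -> exists2 j, colon L j & ~ colon (sval P) j.
Proof.
move=> H; apply: NNPP => Hn; apply: H => r Hr; apply: NNPP => Hr'; apply: Hn.
by exists r.
Qed.

Lemma primeful_colon_surj : faithful M -> primeful M ->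
  forall p, prime_ideal p -> exists P : spec M, colon (sval P) = p.
Proof.
move=> Hfaith [Hzero|Hpf] p Hp.
  suff /eqP : (1 : R) = 0 by rewrite oner_eq0.
  by apply: Hfaith => m; rewrite scale1r.
have [|P [HP HPp]] := Hpf p Hp; first by move=> r /Hfaith ->; case: Hp => [[]].
exists (exist _ P HP); apply: functional_extensionality => r.
exact: propositional_extensionality.
Qed.

End Modules.

Section Localization.
Variables (R : comNzRingType) (N : lmodType R) (p : R -> Prop).
Hypothesis Hp : prime_ideal p.

Lemma scale_diff_eq0 (t a b : R) (u v : N) :
  t *: (a *: u - b *: v) = 0 <-> (t * a) *: u = (t * b) *: v.
Proof.
rewrite scalerBr !scalerA; split => [/eqP|->]; last by rewrite subrr.
by rewrite subr_eq0 => /eqP.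
Qed.

Lemma frac_refl (m : N) s : ~ p s -> Defs.frac p m s (m, s).
Proof.
move=> Hs; split=> //; exists 1; rewrite subrr scaler0; split=> //.
by case: Hp => _ [].
Qed.

Lemma loc_scale_frac (m : N) s r :
  ~ p s -> loc_scale p r (Defs.frac p m s) = Defs.frac p (r *: m) s.
Proof.
move=> Hs; apply: functional_extensionality => -[y1 y2].
apply: propositional_extensionality; split; last first.
  by move=> Hy; exists (m, s); split; [exact: frac_refl | split].
move=> [[x1 x2] [[/= Hx2 [t1 [Ht1 /scale_diff_eq0 E1]]] [_ [Hy2 [t2 [Ht2 /scale_diff_eq0 E2]]]]]].
split=> //; exists (t1 * t2 * x2); split.
  by do 2 apply: prime_idealM_notin => //.
apply/scale_diff_eq0; rewrite /= in E1 E2 *.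
rewrite scalerA.
have -> : t1 * t2 * x2 * y2 * r = (t2 * y2 * r) * (t1 * x2) by ring.
rewrite -scalerA E1 scalerA.
have -> : t2 * y2 * r * (t1 * s) = t1 * s * (t2 * y2) * r by ring.
rewrite -scalerA -(scalerA (t1 * s)) E2 scalerA; congr (_ *: _); ring.
Qed.

Lemma frac_eq0P (m : N) s : ~ p s ->
  Defs.frac p m s = loc0 p <-> exists2 t, ~ p t & t *: m = 0.
Proof.
move=> Hs; split.
  move=> E; have := frac_refl m Hs; rewrite E => -[_ [t [Ht /scale_diff_eq0]]] /=.
  by rewrite scaler0 mulr1 => Etm; exists t.
move=> [t Ht Etm]; apply: functional_extensionality => -[y1 y2].
apply: propositional_extensionality; split.
- move=> [/= Hy2 [t' [Ht' /scale_diff_eq0 /= E]]]; split=> //; exists (t * t' * s); split.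
    by do 2 apply: prime_idealM_notin => //.
  apply/scale_diff_eq0 => /=; rewrite scaler0 mulr1 -mulrA -scalerA -E scalerA.
  by rewrite mulrC -scalerA Etm scaler0.
- move=> [/= Hy2 [t' [Ht' /scale_diff_eq0 /=]]]; rewrite scaler0 mulr1 => E.
  split=> //; exists (t * t'); split; first exact: prime_idealM_notin.
  apply/scale_diff_eq0 => /=.
  have -> : t * t' * y2 = t' * y2 * t by ring.
  have -> : t * t' * s = t * s * t' by ring.
  by rewrite -!scalerA Etm -E !scaler0.
Qed.

End Localization.

Lemma Gamma_restr_ker (R : comNzRingType) (M N : lmodType R) (K : M -> Prop)
    (W : spec M -> Prop) (g : fam N) :
  (forall P : spec M, ~ zV K P -> W P) ->
  Gamma (colon K) W g -> restr_ker W (fun P : spec M => ~ zV K P) g.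
Proof.
move=> HUW [Hsect [n [_ Hkill]]]; split=> // _ [P [HUP <-]].
have [r Hr HrP] := not_zVP HUP.
have [W' [_ [_ [HW'P [s [m Hloc]]]]]] := Hsect P (HUW P HUP).
have [Hs Eg] := Hloc P HW'P; have HPprime := prime_submod_colon (svalP P).
have /(Hkill _ (ideal_powX n Hr)) : supp W (colon (sval P)).
  by exists P; split=> //; apply: HUW.
rewrite Eg loc_scale_frac // => /(frac_eq0P HPprime _ Hs) [t Ht Etm].
apply/(frac_eq0P HPprime _ Hs); exists (t * r ^+ n); last by rewrite -scalerA.
by apply: prime_idealM_notin => //; apply: prime_idealX_notin.
Qed.

Section KernelIsTorsion.
Variables (R : comNzRingType) (M N : lmodType R) (K : M -> Prop) (W : spec M -> Prop).
Variable g : fam N.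
Hypotheses (HR : noetherian R) (HK : submod K)
  (Hcolon_surj : forall p, prime_ideal p -> exists P : spec M, colon (sval P) = p)
  (Hg : restr_ker W (fun P : spec M => ~ zV K P) g).

Definition pow_kills n t := forall r, ideal_pow (colon K) n r ->
  forall p, supp W p -> ~ p t -> loc_scale p r (g p) = loc0 p.

Lemma pow_kills_incr m n t : (m <= n)%N -> pow_kills m t -> pow_kills n t.
Proof. by move=> Hmn Hm r /(ideal_pow_decr (colon_ideal HK) Hmn); apply: Hm. Qed.

Lemma is_ideal_pow_kills n : is_ideal (pow_kills n).
Proof.
have supp_prime p : supp W p -> prime_ideal p.
  by move=> [P [_ <-]]; apply: prime_submod_colon (svalP P).
split; [|split].
- by move=> r _ p /supp_prime [[p0 _] _].
- move=> x y Hx Hy r Hr p Hp Hxy.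
  case: (classic (p x)) => Hpx; last exact: Hx.
  case: (classic (p y)) => Hpy; last exact: Hy.
  by case: (supp_prime p Hp) => [[_ [pD _]] _]; case: Hxy; apply: pD.
- move=> a x Hx r Hr p Hp Hax; apply: Hx => // Hpx; apply: Hax.
  by case: (supp_prime p Hp) => [[_ [_ pM]] _]; apply: pM.
Qed.

Lemma pow_kills_local (P : spec M) : W P ->
  exists2 j, ~ colon (sval P) j & exists n, pow_kills n j.
Proof.
move=> HWP; have [W' [[L' [_ HW']] [_ [HW'P [s [m Hloc]]]]]] := Hg.1 P HWP.
have [j HjL' HjP] := not_zVP (proj1 (HW' P) HW'P); exists j => //.
have W'_of (Q : spec M) : ~ colon (sval Q) j -> W' Q.
  by move=> HjQ; apply/HW' => /(_ j HjL').
pose T0 := sat j (fun r => r *: m = 0).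
have HT0 : is_ideal T0.
  apply: is_ideal_sat; split; [|split]; first by rewrite scale0r.
    by move=> a b Ha Hb; rewrite scalerDl Ha Hb addr0.
  by move=> a b Hb; rewrite -scalerA Hb scaler0.
have primes_over_T0 q : prime_ideal q -> (forall r, T0 r -> q r) -> ~ q j ->
    forall x, colon K x -> q x.
  move=> Hq HT0q Hjq x Hx; apply: NNPP => Hqx.
  have [Q EQ] := Hcolon_surj Hq; subst q.
  have [Hs' Eg] := Hloc Q (W'_of Q Hjq).
  have HUQ : supp (fun P : spec M => ~ zV K P) (colon (sval Q)).
    by exists Q; split=> // Hz; apply: Hqx; apply: Hz.
  have HQprime := prime_submod_colon (svalP Q).
  have := Hg.2 _ HUQ; rewrite Eg => /(frac_eq0P HQprime _ Hs') [t Ht Etm].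
  by apply: Ht; apply: HT0q; apply: sub_sat.
have [n Hn] := noetherian_ideal_pow_sub HR (colon_ideal HK) HT0
  (@sat_saturated _ _ _) primes_over_T0.
exists n => r Hr _ [Q [_ <-]] HjQ.
have [Hs' ->] := Hloc Q (W'_of Q HjQ); have HQprime := prime_submod_colon (svalP Q).
rewrite loc_scale_frac //; apply/(frac_eq0P HQprime _ Hs').
have [k Hk] := Hn r Hr; exists (j ^+ k); first exact: prime_idealX_notin.
by rewrite scalerA.
Qed.

Lemma restr_ker_Gamma : Gamma (colon K) W g.
Proof.
split; first exact: Hg.1.
have [k Hk] := HR (@is_ideal_pow_kills) (fun n t => pow_kills_incr (leqnSn n)).
exists k.+1; split=> // r Hr p Hp; have [P [HWP Ep]] := Hp.
have [j HjP [n Hn]] := pow_kills_local HWP.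
have Hkj : pow_kills k j.
  case: (leqP n k) => [Hnk|/ltnW Hkn]; first exact: pow_kills_incr Hn.
  by move=> r' Hr'; apply: (Hk n) => //; apply: Hn.
by apply: (pow_kills_incr (leqnSn k) Hkj) => //; rewrite -Ep.
Qed.

End KernelIsTorsion.

Theorem proposition3p10 (R : comNzRingType) (M N : lmodType R)
  (K : M -> Prop) (W : spec M -> Prop) :
  noetherian R -> faithful M -> primeful M ->
  (exists P : M -> Prop, prime_submod P) ->
  submod K -> zopen W ->
  (forall P : spec M, ~ zV K P -> W P) ->
  forall g : fam N,
    restr_ker W (fun P : spec M => ~ zV K P) g <-> Gamma (colon K) W g.
Proof.
move=> HR Hfaith Hpf _ HK _ HUW g; split; last exact: Gamma_restr_ker.
by apply: restr_ker_Gamma => //; apply: primeful_colon_surj.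
Qed.
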